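(* Let $H$ be a Hilbert space and let $A=A^*$ be a linear selfadjoint operator in $H$, either bounded or densely defined and unbounded. Let $f\in H$ be such that the equation $Au=f$ is solvable (not necessarily uniquely), and let $y$ be its minimal-norm solution, i.e. the solution with $y\perp N:=\{u: Au=0\}$. For $\delta>0$ let $f_\delta\in H$ satisfy $\|f-f_\delta\|\le\delta$. Let $a=a(\delta)>0$ satisfy $\lim_{\delta\to 0}a(\delta)=0$ and $\lim_{\delta\to0}\frac{\delta}{a(\delta)}=0$. Then the equation $(A+ia(\delta))u=f_\delta$ has a unique solution $u_\delta$, and $$\lim_{\delta\to 0}\|u_\delta-y\|=0.$$
   Context: The problem $Au=f$ is assumed to be ill-posed; the data $f_\delta$ (noisy data) are given while $f$ is not known. *)

From HB Require Import structures.
From mathcomp Require Import all_boot all_order all_algebra.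
From mathcomp Require Import complex.
From mathcomp Require Import all_classical all_reals all_analysis.
Set Implicit Arguments. Unset Strict Implicit. Unset Printing Implicit Defensive.
Import Order.TTheory GRing.Theory Num.Theory.
Local Open Scope ring_scope.

Section Hilbert.
Variables (R : realType) (H : lmodType R[i]) (ip : H -> H -> R[i]).

Definition is_inner_product : Prop :=
  [/\ forall (c : R[i]) (u v w : H), ip (c *: u + v) w = c * ip u w + ip v w,
      forall u v : H, ip u v = (ip v u)^*%C,
      forall u : H, 0 <= ip u u
    & forall u : H, ip u u = 0 -> u = 0].

Definition hnorm (u : H) : R := Num.sqrt (complex.Re (ip u u)).

Definition ip_complete : Prop :=
  forall s : nat -> H,
    (forall e : R, 0 < e -> exists N : nat, forall m n : nat,
        (N <= m)%N -> (N <= n)%N -> hnorm (s m - s n) < e) ->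
    exists l : H, forall e : R, 0 < e -> exists N : nat, forall n : nat,
        (N <= n)%N -> hnorm (s n - l) < e.

Definition hilbert_space : Prop := is_inner_product /\ ip_complete.

(* a (possibly unbounded) linear operator A with domain D : D is a linear
   subspace and A is linear on D (values of A outside D are irrelevant) *)
Definition linear_operator (D : set H) (A : H -> H) : Prop :=
  [/\ D 0,
      forall (c : R[i]) (u v : H), D u -> D v -> D (c *: u + v)
    & forall (c : R[i]) (u v : H), D u -> D v -> A (c *: u + v) = c *: A u + A v].

Definition dense_domain (D : set H) : Prop :=
  forall (x : H) (e : R), 0 < e -> exists u : H, D u /\ hnorm (x - u) < e.

Definition adjoint_rel (D : set H) (A : H -> H) (v w : H) : Prop :=
  forall u : H, D u -> ip (A u) v = ip u w.

(* A is densely defined and A = A^* (equal domains and equal actions) *)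
Definition selfadjoint (D : set H) (A : H -> H) : Prop :=
  [/\ linear_operator D A, dense_domain D
    & forall v w : H, adjoint_rel D A v w <-> (D v /\ A v = w)].

End Hilbert.

From HB Require Import structures.
From mathcomp Require Import all_boot all_order all_algebra.
From mathcomp Require Import complex.
From mathcomp Require Import all_classical all_reals all_analysis.
From mathcomp Require Import ring lra.
Import Order.TTheory GRing.Theory Num.Theory.
Set Implicit Arguments. Unset Strict Implicit. Unset Printing Implicit Defensive.
Local Open Scope ring_scope.
Local Notation Re := complex.Re.
Local Notation Im := complex.Im.

(* The coercivity estimate [a ||u|| <= ||(A + i a) u||], which comes from
   [Im <(A + i a) u, u> = a ||u||^2] for the symmetric operator [A], makes
   [A + i a] injective with closed range ([A] is closed, being selfadjoint);
   a vector orthogonal to that range would be an eigenvector of [A^* = A] for the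
   eigenvalue [i a], so by the projection theorem [A + i a] is onto.
   With [v_b = (A + i b)^-1 y] and the residual [w_b = i b v_b = y - A v_b],
   [u_delta - y = (A + i a)^-1 (f_delta - f) - w_a], hence
   [||u_delta - y|| <= delta / a + ||w_a||].  For [a <= b] one has
   [||w_a - w_b||^2 <= ||w_b||^2 - ||w_a||^2], so [w_b] converges as [b] decreases
   to [0]; its limit lies in [N(A)] since [||A w_b|| <= 2 b ||y||], while every
   [w_b] is orthogonal to [N(A)] because [y] is.  Hence [||w_b||] is bounded by
   the distance from [w_b] to that limit and tends to [0]. *)

Section ScalarFacts.
Variable R : realType.

Lemma discriminant_le (a p q : R) : 0 <= q ->
  (forall t, 0 <= a + 2 * t * p + t ^+ 2 * q) -> p ^+ 2 <= a * q.
Proof.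
move=> q_ge0 ge0.
have [q0|q_neq0] := eqVneq q 0.
  rewrite q0 mulr0; have [->|p_neq0] := eqVneq p 0; first by rewrite expr0n.
  have := ge0 (- (a + 1) / (2 * p)); rewrite q0 mulr0 addr0.
  have -> : 2 * (- (a + 1) / (2 * p)) * p = - (a + 1) by field.
  lra.
have q_gt0 : 0 < q by rewrite lt_def q_neq0.
have := ge0 (- p / q).
have -> : a + 2 * (- p / q) * p + (- p / q) ^+ 2 * q = (a * q - p ^+ 2) / q by field.
by rewrite ler_pdivlMr // mul0r subr_ge0.
Qed.

Lemma eventually_invS_lt (r : R) : 0 < r ->
  exists N : nat, forall n, (N <= n)%N -> n.+1%:R^-1 < r.
Proof.
move=> r_gt0; exists (Num.Def.archi_bound r^-1) => n le_Nn.
have /archi_boundP lt_rN : 0 <= r^-1 by rewrite invr_ge0 ltW.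
rewrite -[r]invrK ltf_pV2 ?posrE ?invr_gt0 ?ltr0n //.
apply: (lt_le_trans lt_rN).
by rewrite ler_nat; apply: leqW.
Qed.

Lemma ReIm_eq0 (c : R[i]) : Re c = 0 -> Im c = 0 -> c = 0.
Proof. by case: c => a b /= -> ->. Qed.

Lemma conjc_imag (a : R) : (Complex 0 a)^*%C = - Complex 0 a.
Proof. by apply/eqP; rewrite eq_complex /= oppr0 !eqxx. Qed.

End ScalarFacts.

Section InnerProduct.
Variables (R : realType) (H : lmodType R[i]) (ip : H -> H -> R[i]).
Hypothesis ip_inner : is_inner_product ip.
Implicit Types (u v w : H) (c : R[i]).
Local Notation hnorm := (hnorm ip).

Lemma ipDZl c u v w : ip (c *: u + v) w = c * ip u w + ip v w.
Proof. by case: ip_inner. Qed.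

Lemma ip_conj u v : ip u v = (ip v u)^*%C.
Proof. by case: ip_inner. Qed.

Lemma ip0l w : ip 0 w = 0.
Proof.
have := ipDZl 1 0 0 w; rewrite scale1r addr0 mul1r => ip0D.
by apply: (addrI (ip 0 w)); rewrite addr0 -ip0D.
Qed.

Lemma ipZl c u w : ip (c *: u) w = c * ip u w.
Proof. by rewrite -[c *: u]addr0 ipDZl ip0l addr0. Qed.

Lemma ipDl u v w : ip (u + v) w = ip u w + ip v w.
Proof. by have := ipDZl 1 u v w; rewrite scale1r mul1r. Qed.

Lemma ipNl u w : ip (- u) w = - ip u w.
Proof. by rewrite -scaleN1r ipZl mulN1r. Qed.

Lemma ipBl u v w : ip (u - v) w = ip u w - ip v w.
Proof. by rewrite ipDl ipNl. Qed.

Lemma ipZr c u w : ip w (c *: u) = c^*%C * ip w u.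
Proof. by rewrite ip_conj ipZl rmorphM /= -ip_conj. Qed.

Lemma ipDr u v w : ip w (u + v) = ip w u + ip w v.
Proof. by rewrite ip_conj ipDl rmorphD /= -!ip_conj. Qed.

Lemma ipNr u w : ip w (- u) = - ip w u.
Proof. by rewrite ip_conj ipNl rmorphN /= -ip_conj. Qed.

Lemma ipBr u v w : ip w (u - v) = ip w u - ip w v.
Proof. by rewrite ipDr ipNr. Qed.

Lemma ip0r w : ip w 0 = 0.
Proof. by rewrite -(subrr w) ipBr subrr. Qed.

Lemma Re_ip_conj u v : Re (ip u v) = Re (ip v u).
Proof. by rewrite ip_conj; case: (ip v u). Qed.

Lemma Im_ip_conj u v : Im (ip u v) = - Im (ip v u).
Proof. by rewrite ip_conj; case: (ip v u). Qed.

Lemma Re_ipZi_l (t : R) u v : Re (ip (Complex 0 t *: u) v) = - t * Im (ip u v).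
Proof. by rewrite ipZl; case: (ip u v) => a b /=; ring. Qed.

Lemma Re_ipZi_r (t : R) u v : Re (ip u (Complex 0 t *: v)) = t * Im (ip u v).
Proof. by rewrite ipZr; case: (ip u v) => a b /=; ring. Qed.

Lemma Re_ipZr_r (t : R) u v : Re (ip u (Complex t 0 *: v)) = t * Re (ip u v).
Proof. by rewrite ipZr; case: (ip u v) => a b /=; ring. Qed.

Lemma Im_ip_self u : Im (ip u u) = 0.
Proof. by case: ip_inner => _ _ /(_ u); rewrite lecE => /andP[/eqP ->]. Qed.

Lemma Re_ip_self_ge0 u : 0 <= Re (ip u u).
Proof. by case: ip_inner => _ _ /(_ u); rewrite lecE => /andP[]. Qed.

Lemma hnorm_ge0 u : 0 <= hnorm u.
Proof. exact: sqrtr_ge0. Qed.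

Lemma sqr_hnorm u : hnorm u ^+ 2 = Re (ip u u).
Proof. by rewrite sqr_sqrtr // Re_ip_self_ge0. Qed.

Lemma hnorm_eq0 u : hnorm u = 0 -> u = 0.
Proof.
move=> u0; case: ip_inner => _ _ _; apply.
move: (Im_ip_self u) (sqr_hnorm u); rewrite u0 expr2 mul0r.
by case: (ip u u) => a b /= -> <-.
Qed.

Lemma hnorm0 : hnorm 0 = 0.
Proof. by rewrite /hnorm ip0l sqrtr0. Qed.

Lemma sqr_hnormD u v :
  hnorm (u + v) ^+ 2 = hnorm u ^+ 2 + 2 * Re (ip u v) + hnorm v ^+ 2.
Proof.
rewrite !sqr_hnorm ipDl !ipDr !raddfD /= (Re_ip_conj v u); ring.
Qed.

Lemma hnormZ c u : hnorm (c *: u) = Num.sqrt (Re c ^+ 2 + Im c ^+ 2) * hnorm u.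
Proof.
rewrite /hnorm ipZl ipZr -sqrtrM ?addr_ge0 ?sqr_ge0 //; congr Num.sqrt.
have := Im_ip_self u; case: (ip u u) => a b /= ->; case: c => x y /=; ring.
Qed.

Lemma hnormZi (t : R) u : hnorm (Complex 0 t *: u) = `|t| * hnorm u.
Proof. by rewrite hnormZ /= expr0n add0r sqrtr_sqr. Qed.

Lemma hnormZr (t : R) u : hnorm (Complex t 0 *: u) = `|t| * hnorm u.
Proof. by rewrite hnormZ /= expr0n addr0 sqrtr_sqr. Qed.

Lemma hnorm_opp u : hnorm (- u) = hnorm u.
Proof.
by rewrite -scaleN1r hnormZ /= oppr0 expr0n addr0 sqrrN expr1n sqrtr1 mul1r.
Qed.

Lemma hnorm_distC u v : hnorm (u - v) = hnorm (v - u).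
Proof. by rewrite -hnorm_opp opprB. Qed.

Lemma normr_Re_ip_le u v : `|Re (ip u v)| <= hnorm u * hnorm v.
Proof.
have : Re (ip u v) ^+ 2 <= hnorm u ^+ 2 * hnorm v ^+ 2.
  apply: discriminant_le => [|t]; first exact: sqr_ge0.
  have := sqr_ge0 (hnorm (u + Complex t 0 *: v)).
  rewrite sqr_hnormD Re_ipZr_r hnormZr exprMn.
  by rewrite real_normK ?num_real //; lra.
move=> /ler_wsqrtr; rewrite -exprMn !sqrtr_sqr.
by rewrite (ger0_norm (mulr_ge0 (hnorm_ge0 u) (hnorm_ge0 v))).
Qed.

Lemma normr_Im_ip_le u v : `|Im (ip u v)| <= hnorm u * hnorm v.
Proof.
by have := normr_Re_ip_le u (Complex 0 1 *: v); rewrite Re_ipZi_r mul1r hnormZi normr1 mul1r.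
Qed.

Lemma ler_hnormD u v : hnorm (u + v) <= hnorm u + hnorm v.
Proof.
rewrite -(ler_pXn2r (_ : 0 < 2)%N) ?nnegrE ?addr_ge0 ?hnorm_ge0 //.
have := le_trans (ler_norm _) (normr_Re_ip_le u v).
rewrite sqr_hnormD sqrrD -mulr_natl; lra.
Qed.

Lemma parallelogram u v :
  hnorm (u + v) ^+ 2 + hnorm (u - v) ^+ 2 = 2 * hnorm u ^+ 2 + 2 * hnorm v ^+ 2.
Proof. by rewrite !sqr_hnormD ipNr raddfN /= hnorm_opp; ring. Qed.

Lemma hnorm_le_sub_orth u v : ip u v = 0 -> hnorm u <= hnorm (u - v).
Proof.
move=> uv0; rewrite -(ler_pXn2r (_ : 0 < 2)%N) ?nnegrE ?hnorm_ge0 //.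
by rewrite sqr_hnormD ipNr uv0 oppr0 mulr0 addr0 lerDl sqr_ge0.
Qed.

End InnerProduct.

Section Convergence.
Variables (R : realType) (H : lmodType R[i]) (ip : H -> H -> R[i]).
Local Notation hnorm := (hnorm ip).

Definition hcvg (s : nat -> H) (l : H) : Prop :=
  forall e : R, 0 < e -> exists N : nat, forall n, (N <= n)%N -> hnorm (s n - l) < e.

Definition hcauchy (s : nat -> H) : Prop :=
  forall e : R, 0 < e -> exists N : nat, forall m n,
    (N <= m)%N -> (N <= n)%N -> hnorm (s m - s n) < e.

Lemma hcvg_scaled s l (K e : R) : hcvg s l -> 0 <= K -> 0 < e ->
  exists N : nat, forall n, (N <= n)%N -> K * hnorm (s n - l) < e.
Proof.
move=> s_to_l K_ge0 e_gt0.
have [N sN] := s_to_l (e / (K + 1)) (divr_gt0 e_gt0 (ltr_wpDl K_ge0 ltr01)).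
exists N => n /sN; rewrite ltr_pdivlMr ?(ltr_wpDl K_ge0 ltr01) // => lt_e.
by apply: le_lt_trans lt_e; rewrite mulrDr mulr1 mulrC lerDl sqrtr_ge0.
Qed.

Hypothesis ip_inner : is_inner_product ip.

Lemma ip_lim x z s t l m : hcvg s l -> hcvg t m ->
  (forall n, ip x (s n) = ip z (t n)) -> ip x l = ip z m.
Proof.
move=> s_to_l t_to_m.
(* The imaginary part of [ip x _] is minus the real part of [ip (i x) _]. *)
suff Re_lim x' z' : (forall n, ip x' (s n) = ip z' (t n)) ->
    Re (ip x' l) = Re (ip z' m).
  move=> xz; apply/eqP; rewrite -subr_eq0; apply/eqP/ReIm_eq0; rewrite raddfB /=.
    by rewrite (Re_lim x z) ?subrr.
  have i_xz n : ip (Complex 0 1 *: x) (s n) = ip (Complex 0 1 *: z) (t n).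
    by rewrite !(ipZl ip_inner) xz.
  have := Re_lim _ _ i_xz; rewrite !(Re_ipZi_l ip_inner) !mulN1r.
  by move/oppr_inj ->; rewrite subrr.
move=> xz'; apply/eqP; rewrite -subr_eq0 -normr_le0; apply/ler_addgt0Pr => e e_gt0.
have e2_gt0 : 0 < e / 2 by rewrite divr_gt0.
have [N1 sN1] := hcvg_scaled s_to_l (hnorm_ge0 ip x') e2_gt0.
have [N2 tN2] := hcvg_scaled t_to_m (hnorm_ge0 ip z') e2_gt0.
pose n := maxn N1 N2.
have -> : Re (ip x' l) - Re (ip z' m) =
    Re (ip z' (t n - m)) - Re (ip x' (s n - l)).
  by rewrite !(ipBr ip_inner) !raddfB /= xz'; ring.
have := sN1 n (leq_maxl _ _); have := tN2 n (leq_maxr _ _).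
have := normr_Re_ip_le ip_inner x' (s n - l).
have := normr_Re_ip_le ip_inner z' (t n - m).
rewrite add0r; set p := Re _; set q := Re _ => le_p le_q lt_p lt_q.
apply: le_trans (ler_normB _ _) _; lra.
Qed.

Lemma hcvg_cauchy s l : hcvg s l -> hcauchy s.
Proof.
move=> s_to_l e e_gt0.
have [N sN] : exists N, forall n, (N <= n)%N -> hnorm (s n - l) < e / 2.
  by apply: s_to_l; rewrite divr_gt0.
exists N => m n le_Nm le_Nn.
have := ler_hnormD ip_inner (s m - l) (l - s n).
rewrite addrA subrK (hnorm_distC ip_inner l).
have := sN m le_Nm; have := sN n le_Nn; lra.
Qed.

Lemma hcvgBZ c s t l m : hcvg s l -> hcvg t m ->
  hcvg (fun n => s n - c *: t n) (l - c *: m).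
Proof.
move=> s_to_l t_to_m e e_gt0; pose K := Num.sqrt (Re c ^+ 2 + Im c ^+ 2).
have e2_gt0 : 0 < e / 2 by rewrite divr_gt0.
have [N1 sN1] := hcvg_scaled s_to_l ler01 e2_gt0.
have [N2 tN2] := hcvg_scaled t_to_m (sqrtr_ge0 _ : 0 <= K) e2_gt0.
exists (maxn N1 N2) => n; rewrite geq_max => /andP[le_N1n le_N2n].
have -> : s n - c *: t n - (l - c *: m) = (s n - l) + - (c *: (t n - m)).
  by rewrite scalerBr !opprB addrACA [RHS]addrACA (addrC (- _)).
apply: le_lt_trans (ler_hnormD ip_inner _ _) _.
rewrite (hnorm_opp ip_inner) (hnormZ ip_inner) -/K.
have := sN1 n le_N1n; have := tN2 n le_N2n; rewrite mul1r; lra.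
Qed.

End Convergence.

Section Projection.
Variables (R : realType) (H : lmodType R[i]) (ip : H -> H -> R[i]).
Hypothesis ip_inner : is_inner_product ip.
Variable S : set H.
Hypothesis S0 : S 0.
Hypothesis S_lin : forall (c : R[i]) u v, S u -> S v -> S (c *: u + v).
Local Notation hnorm := (hnorm ip).

Lemma orth_of_min g h : S h ->
  (forall s, S s -> hnorm (h - g) <= hnorm (s - g)) ->
  forall s, S s -> ip (h - g) s = 0.
Proof.
move=> Sh h_min.
have Re0 s : S s -> Re (ip (h - g) s) = 0.
  move=> Ss; apply/eqP; rewrite -sqrf_eq0 eq_le sqr_ge0 andbT.
  rewrite -(mul0r (hnorm s ^+ 2)); apply: discriminant_le => [|t].
    exact: sqr_ge0.
  have := h_min _ (S_lin (Complex t 0) Ss Sh).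
  rewrite -(ler_pXn2r (_ : 0 < 2)%N) ?nnegrE ?sqrtr_ge0 //.
  rewrite (addrC _ h) addrAC (sqr_hnormD ip_inner (h - g)) (Re_ipZr_r ip_inner).
  rewrite (hnormZr ip_inner) exprMn real_normK ?num_real //; lra.
move=> s Ss; apply: ReIm_eq0; first exact: Re0.
have := Re0 _ (S_lin (Complex 0 1) Ss Ss).
by rewrite (ipDr ip_inner) raddfD /= (Re_ipZi_r ip_inner) Re0 // addr0 mul1r.
Qed.

Lemma cauchy_of_minimizing g (d : R) (s : nat -> H) : 0 <= d ->
  (forall u, S u -> d <= hnorm (u - g)) -> (forall n, S (s n)) ->
  (forall n, hnorm (s n - g) < d + n.+1%:R^-1) -> hcauchy ip s.
Proof.
move=> d_ge0 d_le Ss s_lt e e_gt0.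
pose r := e ^+ 2 / (8 * d + 4).
have r_gt0 : 0 < r by rewrite divr_gt0 ?exprn_gt0 //; lra.
have [N invN] := eventually_invS_lt r_gt0.
have near_min k : (N <= k)%N -> hnorm (s k - g) ^+ 2 < d ^+ 2 + (2 * d + 1) * r.
  move=> le_Nk; have := s_lt k; have := invN k le_Nk.
  have : 0 < k.+1%:R^-1 :> R by rewrite invr_gt0 ltr0n.
  have : k.+1%:R^-1 <= 1 :> R by rewrite invf_le1 ?ler1n ?ltr0n.
  have := hnorm_ge0 ip (s k - g); set ek := k.+1%:R^-1; nra.
exists N => m n le_Nm le_Nn.
rewrite -(ltr_pXn2r (_ : 0 < 2)%N) ?nnegrE ?sqrtr_ge0 ?ltW //.
pose mid := (2^-1 : R[i]) *: s m + 2^-1 *: s n.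
have mid_far : d <= hnorm (mid - g).
  by apply: d_le; apply: S_lin => //; rewrite -[_ *: _]addr0; apply: S_lin.
have sum_mid : (s m - g) + (s n - g) = (mid - g) + (mid - g).
  have half : (2^-1 + 2^-1 : R[i]) = 1 by rewrite [RHS]splitr mul1r.
  rewrite addrACA [RHS]addrACA; congr (_ + _).
  by rewrite /mid addrACA -!scalerDl half !scale1r.
have := parallelogram ip_inner (s m - g) (s n - g).
rewrite sum_mid (sqr_hnormD ip_inner (mid - g)) -(sqr_hnorm ip_inner) opprB addrA subrK.
have := near_min m le_Nm; have := near_min n le_Nn.
have : d ^+ 2 <= hnorm (mid - g) ^+ 2 by rewrite ler_pXn2r ?nnegrE ?hnorm_ge0.
have : (2 * d + 1) * r * 4 = e ^+ 2 by rewrite /r; field; lra.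
lra.
Qed.

Hypothesis ip_compl : ip_complete ip.
Hypothesis S_closed : forall s l, (forall n, S (s n)) -> hcvg ip s l -> S l.

Theorem orthogonal_projection g :
  exists2 h, S h & forall s, S s -> ip (h - g) s = 0.
Proof.
pose dist := [set hnorm (u - g) | u in S]%classic.
have dist_inf : has_inf dist.
  split; first by exists (hnorm (0 - g)), 0.
  by exists 0 => _ [u _ <-]; exact: hnorm_ge0.
pose d := inf dist.
have d_le u : S u -> d <= hnorm (u - g).
  by move=> Su; apply: ge_inf; [exact: (proj2 dist_inf) | exists u].
have d_ge0 : 0 <= d.
  by apply: lb_le_inf (proj1 dist_inf) _ => _ [u _ <-]; exact: hnorm_ge0.
have /boolp.choice[s s_min] n : exists u, S u /\ hnorm (u - g) < d + n.+1%:R^-1.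
  have invS_gt0 : 0 < n.+1%:R^-1 :> R by rewrite invr_gt0 ltr0n.
  by have [_ [u Su <-] lt_d] := inf_adherent invS_gt0 dist_inf; exists u.
have Ss n : S (s n) := (s_min n).1.
have [h s_to_h] := ip_compl (cauchy_of_minimizing d_ge0 d_le Ss (fun n => (s_min n).2)).
have Sh : S h := S_closed Ss s_to_h.
exists h => //; apply: orth_of_min => // u Su.
apply: le_trans (d_le u Su); apply/ler_addgt0Pr => e e_gt0.
have e2_gt0 : 0 < e / 2 by rewrite divr_gt0.
have [N1 sN1] := s_to_h _ e2_gt0.
have [N2 invN2] := eventually_invS_lt e2_gt0.
pose n := maxn N1 N2.
have := ler_hnormD ip_inner (h - s n) (s n - g); rewrite addrA subrK.
have := sN1 n (leq_maxl _ _); rewrite (hnorm_distC ip_inner (s n)).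
have := invN2 n (leq_maxr _ _); have := (s_min n).2.
set i := n.+1%:R^-1; lra.
Qed.

End Projection.

Section LinearOperator.
Variables (R : realType) (H : lmodType R[i]) (D : set H) (A : H -> H).
Hypothesis A_lin : linear_operator D A.
Implicit Types (u v : H) (c : R[i]).

Lemma dom0 : D 0. Proof. by case: A_lin. Qed.

Lemma domDZ c u v : D u -> D v -> D (c *: u + v).
Proof. by case: A_lin => _ + _; apply. Qed.

Lemma domZ c u : D u -> D (c *: u).
Proof. by move=> Du; rewrite -[_ *: _]addr0; apply: domDZ Du dom0. Qed.

Lemma domD u v : D u -> D v -> D (u + v).
Proof. by move=> Du Dv; rewrite -[u]scale1r; apply: domDZ. Qed.

Lemma domB u v : D u -> D v -> D (u - v).
Proof. by move=> Du Dv; rewrite -scaleN1r addrC; apply: domDZ. Qed.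

Lemma linDZ c u v : D u -> D v -> A (c *: u + v) = c *: A u + A v.
Proof. by case: A_lin => _ _; apply. Qed.

Lemma lin0 : A 0 = 0.
Proof.
have := linDZ 1 dom0 dom0; rewrite scale1r !addr0 scale1r => A0D.
by apply: (addrI (A 0)); rewrite addr0 -A0D.
Qed.

Lemma linZ c u : D u -> A (c *: u) = c *: A u.
Proof. by move=> Du; rewrite -[_ *: u]addr0 (linDZ _ Du dom0) lin0 addr0. Qed.

Lemma linB u v : D u -> D v -> A (u - v) = A u - A v.
Proof.
by move=> Du Dv; rewrite -scaleN1r addrC linDZ // scaleN1r addrC.
Qed.

Definition imshift (a : R) (u : H) : H := A u + Complex 0 a *: u.

Lemma imshiftDZ a c u v : D u -> D v ->
  imshift a (c *: u + v) = c *: imshift a u + imshift a v.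
Proof.
by move=> Du Dv; rewrite /imshift linDZ // !scalerDr !scalerA (mulrC c) addrACA.
Qed.

Lemma imshift0 a : imshift a 0 = 0.
Proof. by rewrite /imshift lin0 scaler0 addr0. Qed.

Lemma imshiftZ a c u : D u -> imshift a (c *: u) = c *: imshift a u.
Proof. by move=> Du; rewrite -[_ *: u]addr0 (imshiftDZ _ _ Du dom0) imshift0 addr0. Qed.

Lemma imshiftD a u v : D u -> D v -> imshift a (u + v) = imshift a u + imshift a v.
Proof. by move=> Du Dv; rewrite -[u + v]/(u + v) -{1}[u]scale1r imshiftDZ // scale1r. Qed.

Lemma imshiftB a u v : D u -> D v -> imshift a (u - v) = imshift a u - imshift a v.
Proof. by move=> Du Dv; rewrite -scaleN1r addrC imshiftDZ // scaleN1r addrC. Qed.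

End LinearOperator.

Section SelfAdjoint.
Variables (R : realType) (H : lmodType R[i]) (ip : H -> H -> R[i]).
Variables (D : set H) (A : H -> H).
Hypothesis ip_inner : is_inner_product ip.
Hypothesis A_sa : selfadjoint ip D A.
Local Notation hnorm := (hnorm ip).
Local Notation imshift := (imshift A).
Implicit Types (a : R) (u v w z : H).

Let A_lin : linear_operator D A. Proof. by case: A_sa. Qed.

Lemma adjoint_relP v w : adjoint_rel ip D A v w <-> D v /\ A v = w.
Proof. by case: A_sa. Qed.

Lemma op_sym u v : D u -> D v -> ip (A u) v = ip u (A v).
Proof. by move=> Du Dv; apply: (adjoint_relP v (A v)).2. Qed.

Lemma Im_ip_op_self u : D u -> Im (ip (A u) u) = 0.
Proof.
by move=> Du; have := Im_ip_conj ip_inner (A u) u; rewrite op_sym //; lra.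
Qed.

Lemma op_closed s u h : (forall n, D (s n)) ->
  hcvg ip s u -> hcvg ip (A \o s) h -> D u /\ A u = h.
Proof.
move=> Ds s_to_u As_to_h; apply/adjoint_relP => v Dv.
by apply: (ip_lim ip_inner s_to_u As_to_h) => n; apply: op_sym.
Qed.

Lemma Im_ip_imshift_self a u : D u -> Im (ip (imshift a u) u) = a * hnorm u ^+ 2.
Proof.
move=> Du; rewrite /imshift (ipDl ip_inner) raddfD /= Im_ip_op_self // add0r.
rewrite (ipZl ip_inner) (sqr_hnorm ip_inner).
by have := Im_ip_self ip_inner u; case: (ip u u) => x y /= ->; ring.
Qed.

Lemma imshift_coercive a u : 0 <= a -> D u -> a * hnorm u <= hnorm (imshift a u).
Proof.
move=> a_ge0 Du; have [u0|u_neq0] := eqVneq (hnorm u) 0.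
  by rewrite u0 mulr0 hnorm_ge0.
have u_gt0 : 0 < hnorm u by rewrite lt_def u_neq0 hnorm_ge0.
rewrite -(ler_pM2r u_gt0) -mulrA -expr2 -Im_ip_imshift_self //.
exact: le_trans (ler_norm _) (normr_Im_ip_le ip_inner _ _).
Qed.

Lemma imshift_inj a u v : 0 < a -> D u -> D v -> imshift a u = imshift a v -> u = v.
Proof.
move=> a_gt0 Du Dv eq_uv; apply/eqP; rewrite -subr_eq0; apply/eqP.
apply: (hnorm_eq0 ip_inner).
have := imshift_coercive (ltW a_gt0) (domB A_lin Du Dv).
rewrite (imshiftB A_lin) // eq_uv subrr (hnorm0 ip_inner).
by have := hnorm_ge0 ip (u - v); nra.
Qed.

Lemma imshift_range_orth (a : R) z : a != 0 ->
  (forall u, D u -> ip z (imshift a u) = 0) -> z = 0.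
Proof.
move=> a_neq0 z_orth.
(* [z] is orthogonal to the range of [A + i a], so [A^* z = i a z]; then [(A - i a) z = 0] while
   [Im <(A - i a) z, z> = - a ||z||^2]. *)
have [Dz Az] : D z /\ A z = Complex 0 a *: z.
  apply/adjoint_relP => u Du; apply/eqP; rewrite (ipZr ip_inner) conjc_imag.
  rewrite mulNr -(ipZl ip_inner) -addr_eq0 -(ipDl ip_inner) (ip_conj ip_inner).
  by rewrite z_orth // conjc0.
have : Im (ip (imshift (- a) z) z) = 0.
  have ia_opp : Complex 0 a + Complex 0 (- a) = 0.
    by rewrite -[Complex 0 (- a)]/((Complex 0 a)^*%C) conjc_imag subrr.
  by rewrite /imshift Az -scalerDl ia_opp scale0r (ip0l ip_inner).
rewrite Im_ip_imshift_self // => /eqP; rewrite mulf_eq0 oppr_eq0 (negPf a_neq0) /=.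
by rewrite sqrf_eq0 => /eqP /(hnorm_eq0 ip_inner).
Qed.

Hypothesis ip_compl : ip_complete ip.

Lemma imshift_range_closed a s h : 0 < a -> (forall n, D (s n)) ->
  hcvg ip (imshift a \o s) h -> exists2 u, D u & imshift a u = h.
Proof.
move=> a_gt0 Ds Ts_to_h.
have [u s_to_u] : exists u, hcvg ip s u.
  apply: ip_compl => e e_gt0.
  have [N TsN] := hcvg_cauchy ip_inner Ts_to_h (mulr_gt0 a_gt0 e_gt0).
  exists N => m n le_Nm le_Nn; rewrite -(ltr_pM2l a_gt0).
  apply: le_lt_trans (imshift_coercive (ltW a_gt0) (domB A_lin (Ds m) (Ds n))) _.
  by rewrite (imshiftB A_lin) //; apply: TsN.
have As_eq : A \o s = fun n => imshift a (s n) - Complex 0 a *: s n.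
  by apply/funext => n /=; rewrite /imshift addrK.
have As_to : hcvg ip (A \o s) (h - Complex 0 a *: u).
  by rewrite As_eq; apply: (hcvgBZ ip_inner).
have [Du Au] := op_closed Ds s_to_u As_to.
by exists u => //; rewrite /imshift Au subrK.
Qed.

Lemma imshift_surj a g : 0 < a -> exists2 u, D u & imshift a u = g.
Proof.
move=> a_gt0; pose S := [set imshift a u | u in D]%classic.
have S_lin c u v : S u -> S v -> S (c *: u + v).
  move=> [u' Du' <-] [v' Dv' <-]; exists (c *: u' + v').
    exact: (domDZ A_lin).
  exact: (imshiftDZ A_lin).
have S_closed s l : (forall n, S (s n)) -> hcvg ip s l -> S l.
  move=> Ss s_to_l.
  have /boolp.choice[u su] n : exists u, D u /\ imshift a u = s n.
    by have [u Du <-] := Ss n; exists u.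
  have s_eq : s = imshift a \o u by apply/funext => n /=; rewrite (su n).2.
  rewrite s_eq in s_to_l.
  by have [v Dv <-] := imshift_range_closed a_gt0 (fun n => (su n).1) s_to_l; exists v.
have S0 : S 0 by exists 0; [exact: dom0 A_lin | exact: (imshift0 A_lin)].
have [_ [u Du <-] orth] := orthogonal_projection ip_inner S0 S_lin ip_compl S_closed g.
exists u => //; apply/eqP; rewrite -subr_eq0; apply/eqP.
by apply: (imshift_range_orth (lt0r_neq0 a_gt0)) => v Dv; apply: orth; exists v.
Qed.

End SelfAdjoint.

Section Regularization.
Variables (R : realType) (H : lmodType R[i]) (ip : H -> H -> R[i]).
Variables (D : set H) (A : H -> H) (y : H) (v : R -> H).
Hypothesis ip_inner : is_inner_product ip.
Hypothesis A_sa : selfadjoint ip D A.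
Hypothesis Dy : D y.
Hypothesis v_sol : forall b : R, 0 < b -> D (v b) /\ imshift A b (v b) = y.
Local Notation hnorm := (hnorm ip).
Implicit Types (a b : R) (u : H).

Let A_lin : linear_operator D A. Proof. by case: A_sa. Qed.

Definition residual (b : R) : H := Complex 0 b *: v b.

Lemma op_v b : 0 < b -> A (v b) = y - residual b.
Proof. by move=> b_gt0; rewrite -(v_sol b_gt0).2 addrK. Qed.

Lemma D_residual b : 0 < b -> D (residual b).
Proof. by move=> b_gt0; apply: (domZ A_lin); exact: (v_sol b_gt0).1. Qed.

Lemma hnorm_residual_le b : 0 < b -> hnorm (residual b) <= hnorm y.
Proof.
move=> b_gt0; have [Dvb <-] := v_sol b_gt0.
rewrite /residual (hnormZi ip_inner) gtr0_norm //.
exact: (imshift_coercive ip_inner A_sa (ltW b_gt0) Dvb).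
Qed.

Lemma hnorm_op_residual_le b : 0 < b -> hnorm (A (residual b)) <= 2 * b * hnorm y.
Proof.
move=> b_gt0; rewrite /residual (linZ A_lin _ (v_sol b_gt0).1) op_v // scalerBr.
apply: le_trans (ler_hnormD ip_inner _ _) _.
rewrite (hnorm_opp ip_inner) (hnormZi ip_inner b y) (hnormZi ip_inner b (residual b)).
rewrite gtr0_norm //.
have := hnorm_residual_le b_gt0; have := hnorm_ge0 ip y; nra.
Qed.

Lemma sqr_hnorm_residual_sub_le a b : 0 < a -> a <= b ->
  hnorm (residual a - residual b) ^+ 2 <=
  hnorm (residual b) ^+ 2 - hnorm (residual a) ^+ 2.
Proof.
move=> a_gt0; rewrite le_eqVlt => /predU1P[<-|lt_ab].
  by rewrite !subrr (hnorm0 ip_inner) expr0n.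
have b_gt0 : 0 < b by apply: lt_trans lt_ab.
have [Dva _] := v_sol a_gt0; have [Dvb _] := v_sol b_gt0.
pose r := v a - v b; have Dr : D r := domB A_lin Dva Dvb.
have Ar : A r = residual b - residual a.
  by rewrite (linB A_lin) // !op_v // opprB addrC addrA subrK.
have ra : imshift A b r = Complex 0 (b - a) *: v a.
  rewrite /imshift Ar /residual scalerBr addrC addrA subrK -scalerBl.
  by congr (_ *: _); apply/eqP; rewrite eq_complex /= subrr !eqxx.
(* [(A + i b) r = i (b - a) v a], and [<(A + i b) r, A r>] has real part [||A r||^2]. *)
have key : (b - a) * Re (ip (residual a) (A r)) = a * hnorm (A r) ^+ 2.
  have := congr1 (fun x => Re (ip x (A r))) ra; rewrite /= (Re_ipZi_l ip_inner).
  rewrite /imshift (ipDl ip_inner) raddfD /= -(sqr_hnorm ip_inner) (Re_ipZi_l ip_inner).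
  rewrite (Im_ip_conj ip_inner r) (Im_ip_op_self ip_inner A_sa) //.
  rewrite oppr0 mulr0 addr0 => eq_r.
  by rewrite /residual (Re_ipZi_l ip_inner) eq_r; ring.
have -> : residual b = residual a + A r by rewrite Ar addrC subrK.
rewrite opprD addrA subrr sub0r (hnorm_opp ip_inner) (sqr_hnormD ip_inner).
have := sqr_ge0 (hnorm (A r)); have := subr_gt0 a b; rewrite lt_ab; nra.
Qed.

Lemma hnorm_residual_mono a b : 0 < a -> a <= b ->
  hnorm (residual a) <= hnorm (residual b).
Proof.
move=> a_gt0 le_ab; rewrite -(ler_pXn2r (_ : 0 < 2)%N) ?nnegrE ?hnorm_ge0 //.
have := sqr_hnorm_residual_sub_le a_gt0 le_ab.
have := sqr_ge0 (hnorm (residual a - residual b)); lra.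
Qed.

Lemma hnorm_sol_sub_le a u g : 0 < a -> D u -> imshift A a u = g ->
  hnorm (u - y) <= hnorm (g - A y) / a + hnorm (residual a).
Proof.
move=> a_gt0 Du Tu; have [Dva Tva] := v_sol a_gt0.
pose e := u - y + residual a.
have De : D e := domD A_lin (domB A_lin Du Dy) (D_residual a_gt0).
have Te : imshift A a e = g - A y.
  rewrite /e (imshiftD A_lin _ (domB A_lin Du Dy) (D_residual a_gt0)).
  rewrite (imshiftB A_lin) // (imshiftZ A_lin) // Tva Tu /imshift.
  by rewrite opprD addrA subrK.
have e_le : hnorm e <= hnorm (g - A y) / a.
  by rewrite ler_pdivlMr // mulrC -Te (imshift_coercive ip_inner A_sa) // ltW.
have -> : u - y = e - residual a by rewrite /e addrK.
by apply: le_trans (ler_hnormD ip_inner _ _) _; rewrite (hnorm_opp ip_inner) lerD2r.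
Qed.

Lemma residual_invS_cauchy : hcauchy ip (fun n => residual n.+1%:R^-1).
Proof.
pose W n := residual n.+1%:R^-1.
have invS_gt0 n : 0 < n.+1%:R^-1 :> R by rewrite invr_gt0 ltr0n.
have invS_anti m n : (n <= m)%N -> m.+1%:R^-1 <= n.+1%:R^-1 :> R.
  by move=> le_nm; rewrite lef_pV2 ?posrE ?ltr0n // ler_nat.
pose L := inf (range (fun n => hnorm (W n) ^+ 2)).
have L_inf : has_inf (range (fun n => hnorm (W n) ^+ 2)).
  by split; [exists (hnorm (W 0) ^+ 2), 0 | exists 0 => _ [n _ <-]; exact: sqr_ge0].
have L_le n : L <= hnorm (W n) ^+ 2.
  by apply: ge_inf; [exact: (proj2 L_inf) | exists n].
move=> e e_gt0; have e2_gt0 : 0 < e ^+ 2 by rewrite exprn_gt0.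
have [_ [n0 _ <-] lt_n0] := inf_adherent e2_gt0 L_inf.
exists n0 => m n le_m le_n.
wlog le_nm : m n le_m le_n / (n <= m)%N.
  move=> wlog_le; have [le_nm|/ltnW le_mn] := leqP n m; first exact: wlog_le.
  by rewrite (hnorm_distC ip_inner); apply: wlog_le.
rewrite -(ltr_pXn2r (_ : 0 < 2)%N) ?nnegrE ?hnorm_ge0 ?ltW //.
have := sqr_hnorm_residual_sub_le (invS_gt0 m) (invS_anti _ _ le_nm).
have := hnorm_residual_mono (invS_gt0 n) (invS_anti _ _ le_n).
rewrite -(ler_pXn2r (_ : 0 < 2)%N) ?nnegrE ?hnorm_ge0 //.
have := L_le m; rewrite -/(W m) -/(W n) -/(W n0) -/L; lra.
Qed.

Hypothesis y_perp_ker : forall u, D u -> A u = 0 -> ip y u = 0.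

Lemma residual_orth_ker b u : 0 < b -> D u -> A u = 0 -> ip (residual b) u = 0.
Proof.
move=> b_gt0 Du Au0; have [Dvb _] := v_sol b_gt0.
apply/eqP; rewrite -subr_eq0 -[residual b](subKr y) -op_v //.
by rewrite (ipBl ip_inner) (op_sym A_sa) // Au0 (ip0r ip_inner) y_perp_ker // !subr0.
Qed.

Hypothesis ip_compl : ip_complete ip.

Lemma residual_small e : 0 < e ->
  exists2 b0, 0 < b0 & forall b, 0 < b -> b <= b0 -> hnorm (residual b) < e.
Proof.
move=> e_gt0; pose W n := residual n.+1%:R^-1.
have invS_gt0 n : 0 < n.+1%:R^-1 :> R by rewrite invr_gt0 ltr0n.
have [w0 W_to_w0] := ip_compl residual_invS_cauchy.
have AW_to_0 : hcvg ip (A \o W) 0.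
  move=> e' e'_gt0; have K_gt0 : 0 < 2 * hnorm y + 1.
    by have := hnorm_ge0 ip y; lra.
  have [N invN] := eventually_invS_lt (divr_gt0 e'_gt0 K_gt0).
  exists N => n /invN; rewrite ltr_pdivlMr // subr0 => lt_e'.
  apply: le_lt_trans (hnorm_op_residual_le (invS_gt0 n)) _.
  apply: le_lt_trans lt_e'; have := hnorm_ge0 ip y; have := invS_gt0 n.
  set i := n.+1%:R^-1; nra.
have [Dw0 Aw0] :=
  op_closed ip_inner A_sa (fun n => D_residual (invS_gt0 n)) W_to_w0 AW_to_0.
have [N WN] := W_to_w0 e e_gt0.
exists N.+1%:R^-1 => // b b_gt0 le_b.
apply: le_lt_trans (hnorm_residual_mono b_gt0 le_b) _.
apply: le_lt_trans (WN N (leqnn N)).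
by apply: (hnorm_le_sub_orth ip_inner); apply: residual_orth_ker.
Qed.

End Regularization.

Local Open Scope classical_set_scope.

Theorem theorem1 (R : realType) (H : lmodType R[i]) (ip : H -> H -> R[i])
    (D : set H) (A : H -> H) (f y : H) (f_ : R -> H) (a : R -> R) :
  hilbert_space ip ->
  selfadjoint ip D A ->
  (* y is the minimal-norm solution of A u = f : a solution orthogonal to N(A) *)
  D y -> A y = f ->
  (forall u : H, D u -> A u = 0 -> ip y u = 0) ->
  (forall d : R, 0 < d -> hnorm ip (f - f_ d) <= d) ->
  (forall d : R, 0 < d -> 0 < a d) ->
  a d @[d --> 0^'+] --> 0 ->
  d / a d @[d --> 0^'+] --> 0 ->
  (forall d : R, 0 < d ->
     exists! u : H, D u /\ A u + (Complex 0 (a d)) *: u = f_ d) /\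
  (forall u_ : R -> H,
     (forall d : R, 0 < d -> D (u_ d) /\ A (u_ d) + (Complex 0 (a d)) *: u_ d = f_ d) ->
     hnorm ip (u_ d - y) @[d --> 0^'+] --> 0).
Proof.
move=> [ip_inner ip_compl] A_sa Dy <- y_perp f_near a_gt0 a_to0 d_over_a_to0.
split=> [d d_gt0 | u_ u_sol].
  have [u Du Tu] := imshift_surj ip_inner A_sa ip_compl (f_ d) (a_gt0 d d_gt0).
  exists u; split=> // u' [Du' Tu'].
  by apply: (imshift_inj ip_inner A_sa (a_gt0 d d_gt0)) => //; rewrite Tu.
have /boolp.choice[v v_sol] (b : R) : exists v, 0 < b -> D v /\ imshift A b v = y.
  have [b_gt0|_] := ltrP 0 b; last by exists 0.
  by have [v Dv Tv] := imshift_surj ip_inner A_sa ip_compl y b_gt0; exists v.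
apply/cvgrPdist_lt => e e_gt0; have e2_gt0 : 0 < e / 2 by rewrite divr_gt0.
have [b0 b0_gt0 res_small] := residual_small ip_inner A_sa v_sol y_perp ip_compl e2_gt0.
move/cvgrPdist_lt : a_to0 => /(_ b0 b0_gt0) a_near.
move/cvgrPdist_lt : d_over_a_to0 => /(_ _ e2_gt0) d_over_a_near.
near=> d.
have d_gt0 : 0 < d by near: d; exact: nbhs_right_gt.
have ad_gt0 := a_gt0 d d_gt0.
have ad_lt : `|0 - a d| < b0 by near: d; exact: a_near.
have da_lt : `|0 - d / a d| < e / 2 by near: d; exact: d_over_a_near.
rewrite sub0r normrN gtr0_norm // in ad_lt.
rewrite sub0r normrN gtr0_norm ?divr_gt0 // in da_lt.
have [Du Tu] := u_sol d d_gt0.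
have := hnorm_sol_sub_le ip_inner A_sa Dy v_sol ad_gt0 Du Tu.
have := res_small _ ad_gt0 (ltW ad_lt).
rewrite sub0r normrN ger0_norm ?hnorm_ge0 // (hnorm_distC ip_inner).
have : hnorm ip (f_ d - A y) / a d <= d / a d.
  by rewrite ler_pM2r ?invr_gt0 // (hnorm_distC ip_inner) f_near.
lra.
Unshelve. all: by end_near.
Qed.
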